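(* Let $\alpha,c\in\mathbb{N}$, $\alpha,c\ge1$, and let $F=(n_F)_{n\ge0}$ with $0_F=1$ and $n_F=\alpha^{n-1}c^n$ for $n\ge1$ (so that $(m+k)_F=\alpha\, m_F\, k_F$ for all $m,k\ge1$). Then for all $1\le a\le b$, the layer $\langle\Phi_a\to\Phi_b\rangle$ of the cobweb poset of $F$ admits a tiling by blocks of type $\sigma P_{b-a+1}$.
   Context: Notation: $n_F\equiv F_n$. The cobweb poset of $F$ has, for each $s\ge1$, a level $\Phi_s$ consisting of $s_F$ distinct vertices (levels pairwise disjoint), plus a root level $\Phi_0$ with one vertex; for $x\in\Phi_i$, $y\in\Phi_j$ one has $x<y$ iff $i<j$. For $1\le a\le b$, the layer $\langle\Phi_a\to\Phi_b\rangle$ is the subposet on $\Phi_a\cup\dots\cup\Phi_b$; it has $m=b-a+1$ levels and its maximal chains form the set $\Phi_a\times\dots\times\Phi_b$. For a permutation $\sigma$ of $\{1,\dots,m\}$, a block of type $\sigma P_m$ in this layer is the subposet induced on $V_a\cup\dots\cup V_b$ where $V_{a-1+i}\subseteq\Phi_{a-1+i}$ and $|V_{a-1+i}|=\sigma(i)_F$ for $i=1,\dots,m$; its maximal chains form the set $V_a\times\dots\times V_b$. A tiling of the layer is a finite family of such blocks ($\sigma$ may vary from block to block) whose sets $V_a\times\dots\times V_b$ partition $\Phi_a\times\dots\times\Phi_b$ (pairwise max-disjoint and covering all maximal chains). *)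

From mathcomp Require Import all_boot all_fingroup.
Set Implicit Arguments. Unset Strict Implicit. Unset Printing Implicit Defensive.

Definition Fseq (alpha c : nat) (n : nat) : nat :=
  if n is n'.+1 then alpha ^ n' * c ^ n else 1.

(* Cobweb poset of F: level Phi_s has (F s) vertices, encoded as the naturals
   k < F s (the vertex (s,k)); levels are disjoint by construction.
   Layer <Phi_a -> Phi_b> with m = b - a + 1 levels: level i : 'I_m is Phi_(a+i).
   A maximal chain of the layer is an element of Phi_a x ... x Phi_b, encoded as
   c : 'I_m -> nat with c i < F (a + i). *)
Definition layer_chain (F : nat -> nat) (a m : nat) (ch : 'I_m -> nat) : Prop :=
  forall i : 'I_m, ch i < F (a + i).

(* A block of type sigma P_m in the layer: subsets V_(a+i) of Phi_(a+i)
   (duplicate-free lists of vertex indices < F (a+i)) with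
   |V_(a+i)| = (sigma(i+1))_F  (sigma on {1..m} read as a permutation of 'I_m). *)
Definition is_block (F : nat -> nat) (a m : nat) (sigma : 'S_m)
  (V : 'I_m -> seq nat) : Prop :=
  forall i : 'I_m,
    [/\ uniq (V i), all (fun x => x < F (a + i)) (V i) & size (V i) = F (sigma i).+1].

Definition chain_in_block (m : nat) (V : 'I_m -> seq nat) (ch : 'I_m -> nat) : bool :=
  [forall i : 'I_m, ch i \in V i].

Definition is_tiling (F : nat -> nat) (a m : nat)
  (T : seq ('S_m * ('I_m -> seq nat))) : Prop :=
  (forall j, j < size T -> is_block F a (nth (1%g, fun _ => [::]) T j).1
                                    (nth (1%g, fun _ => [::]) T j).2) /\
  (forall ch : 'I_m -> nat, layer_chain F a ch ->
     count (fun B => chain_in_block B.2 ch) T = 1).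

From mathcomp Require Import all_boot all_fingroup.

(* Fix a permutation sigma of the m levels of a layer and write
   d_i := (sigma i + 1)_F for the number of vertices a block of type sigma P_m
   takes from level a+i.  If every d_i is positive and divides the size
   (a+i)_F of that level, cut level a+i into consecutive intervals
   [q d_i, (q+1) d_i) of length d_i.  Choosing one interval per level gives a
   block of type sigma P_m, and a maximal chain ch lies in exactly one such
   block, namely the one whose interval indices are q_i = ch_i / d_i.  Hence
   all these "grid blocks" tile the layer (lemma [grid_tiling]).
   For F = Fseq alpha c the identity permutation qualifies: (i+1)_F divides
   (a+i)_F as soon as a >= 1, since n_F = alpha^(n-1) c^n is monotone for
   divisibility ([Fseq_dvd]); the main theorem follows. *)

Lemma mem_iota_interval (d q x : nat) :
  0 < d -> (x \in iota (q * d) d) = (x %/ d == q).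
Proof.
move=> d_gt0; rewrite mem_iota eqn_leq leq_divRL // [_ + d]addnC -mulSn.
by rewrite -ltn_divLR // ltnS andbC.
Qed.

Section GridTiling.

Variables (F : nat -> nat) (a m : nat) (sigma : 'S_m).

Let d (i : 'I_m) : nat := F (sigma i).+1.

Hypothesis d_gt0 : forall i, 0 < d i.
Hypothesis d_dvd : forall i, d i %| F (a + i).

(* A bound on all interval indices, so that they range over a finite type. *)
Let N : nat := (\sum_(i < m) F (a + i)).+1.

Definition grid_block (g : {ffun 'I_m -> 'I_N}) : 'I_m -> seq nat :=
  fun i => iota (g i * d i) (d i).

Definition grid_fits (g : {ffun 'I_m -> 'I_N}) : bool :=
  [forall i, (g i).+1 * d i <= F (a + i)].

Definition grid_tiling : seq ('S_m * ('I_m -> seq nat)) :=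
  [seq (sigma, grid_block g) | g <- enum {ffun 'I_m -> 'I_N} & grid_fits g].

Lemma grid_block_is_block (g : {ffun 'I_m -> 'I_N}) :
  grid_fits g -> is_block F a sigma (grid_block g).
Proof.
move=> /forallP g_fits i; split; first exact: iota_uniq.
- apply/allP => x; rewrite mem_iota => /andP[_ x_lt].
  by apply: leq_trans x_lt _; rewrite addnC -mulSn.
- by rewrite size_iota.
Qed.

Lemma cell_index_lt (ch : 'I_m -> nat) :
  layer_chain F a ch -> forall i, ch i %/ d i < N.
Proof.
move=> ch_in i; rewrite ltnS; apply: leq_trans (leq_div _ _) _.
by rewrite (bigD1 i) //= (leq_trans (ltnW (ch_in i))) ?leq_addr.
Qed.

Lemma chain_in_grid_block (ch : 'I_m -> nat) (ch_in : layer_chain F a ch)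
    (g : {ffun 'I_m -> 'I_N}) :
  chain_in_block (grid_block g) ch && grid_fits g =
  (g == [ffun i => Ordinal (@cell_index_lt ch ch_in i)]).
Proof.
apply/idP/eqP => [/andP[/forallP ch_g _] | ->].
  apply/ffunP => i; apply/val_inj; rewrite ffunE /=.
  by apply/esym/eqP; rewrite -mem_iota_interval.
rewrite /grid_fits /chain_in_block /grid_block.
apply/andP; split; apply/forallP => i; rewrite ffunE /=.
  by rewrite mem_iota_interval.
by rewrite -leq_divRL // ltn_divLR // divnK.
Qed.

Lemma grid_tiling_is_tiling : is_tiling F a grid_tiling.
Proof.
split=> [j | ch ch_in].
  rewrite size_map => j_lt; rewrite (nth_map [ffun=> ord0]) //=.
  have := mem_nth [ffun=> ord0] j_lt; rewrite mem_filter => /andP[g_fits _].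
  exact: grid_block_is_block.
rewrite count_map count_filter (eq_count (@chain_in_grid_block ch ch_in)).
by rewrite count_uniq_mem ?enum_uniq // mem_enum.
Qed.

End GridTiling.

Lemma tiling_of_dvd (F : nat -> nat) (a m : nat) (sigma : 'S_m) :
  (forall i : 'I_m, 0 < F (sigma i).+1) ->
  (forall i : 'I_m, F (sigma i).+1 %| F (a + i)) ->
  exists T : seq ('S_m * ('I_m -> seq nat)), is_tiling F a T.
Proof. by move=> d_gt0 d_dvd; eexists; exact: grid_tiling_is_tiling d_gt0 d_dvd. Qed.

Lemma Fseq_gt0 (alpha c n : nat) : 0 < alpha -> 0 < c -> 0 < Fseq alpha c n.
Proof. by case: n => //= n alpha_gt0 c_gt0; rewrite muln_gt0 !expn_gt0 alpha_gt0 c_gt0. Qed.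

Lemma Fseq_dvd (alpha c n k : nat) : n.+1 <= k -> Fseq alpha c n.+1 %| Fseq alpha c k.
Proof. by case: k => // k; rewrite ltnS /= => le_nk; rewrite dvdn_mul ?dvdn_exp2l. Qed.

Theorem mainTheorem7 (alpha c : nat) (halpha : 1 <= alpha) (hc : 1 <= c)
  (a b : nat) (ha : 1 <= a) (hab : a <= b) :
  exists T : seq ('S_(b - a + 1) * ('I_(b - a + 1) -> seq nat)),
    is_tiling (Fseq alpha c) a T.
Proof.
apply: (@tiling_of_dvd _ a _ 1%g) => i; rewrite perm1.
  exact: Fseq_gt0.
by apply: Fseq_dvd; rewrite -addn1 addnC leq_add2r.
Qed.
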